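(* Let $\alpha,\mu,\gamma>0$ and consider on the simplex $\Sigma=\{(L,R)\in\mathbb{R}^2: L\ge 0,\ R\ge 0,\ L+R\le 1\}$ the system \[ \dot L=\alpha L C-\mu L+\gamma R C,\qquad \dot R=\alpha R C-\mu R+\gamma L C,\qquad C=1-L-R. \] Set $\beta=\alpha+\gamma$. Then: (1) If $\beta\le\mu$, the equilibrium $E_0=(0,0)$ is globally asymptotically stable on $\Sigma$; in particular $L(t),R(t)\to 0$ and $C(t)\to 1$ for every solution starting in $\Sigma$. (2) If $\beta>\mu$, the point $E_1=(P^*,P^* )$ with $P^*=\tfrac12(1-\mu/\beta)$ (so that $C^*=1-2P^*=\mu/\beta$) is the unique interior equilibrium, it is globally asymptotically stable on $\Sigma\setminus\{E_0\}$, and $E_0$ is unstable. *)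

From Stdlib Require Import Reals Lra.
From Coquelicot Require Import Coquelicot.
Open Scope R_scope.

Definition Cfree (x y : R) : R := 1 - x - y.
Definition fL (al mu ga x y : R) : R :=
  al * x * Cfree x y - mu * x + ga * y * Cfree x y.
Definition fR (al mu ga x y : R) : R :=
  al * y * Cfree x y - mu * y + ga * x * Cfree x y.

Definition in_simplex (x y : R) : Prop := 0 <= x /\ 0 <= y /\ x + y <= 1.
Definition in_interior (x y : R) : Prop := 0 < x /\ 0 < y /\ x + y < 1.

Definition is_solution (al mu ga : R) (Lf Rf : R -> R) : Prop :=
  (forall t, 0 < t ->
     is_derive Lf t (fL al mu ga (Lf t) (Rf t)) /\
     is_derive Rf t (fR al mu ga (Lf t) (Rf t))) /\
  filterlim Lf (at_right 0) (locally (Lf 0)) /\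
  filterlim Rf (at_right 0) (locally (Rf 0)).

Definition dist2 (x1 y1 x2 y2 : R) : R := sqrt ((x1 - x2) ^ 2 + (y1 - y2) ^ 2).

Definition equilibrium (al mu ga e1 e2 : R) : Prop :=
  fL al mu ga e1 e2 = 0 /\ fR al mu ga e1 e2 = 0.

Definition stable_on (al mu ga : R) (S : R -> R -> Prop) (e1 e2 : R) : Prop :=
  forall eps, 0 < eps -> exists delta, 0 < delta /\
    forall Lf Rf, is_solution al mu ga Lf Rf -> S (Lf 0) (Rf 0) ->
      dist2 (Lf 0) (Rf 0) e1 e2 < delta ->
      forall t, 0 <= t -> dist2 (Lf t) (Rf t) e1 e2 < eps.

Definition attractive_on (al mu ga : R) (S : R -> R -> Prop) (e1 e2 : R) : Prop :=
  forall Lf Rf, is_solution al mu ga Lf Rf -> S (Lf 0) (Rf 0) ->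
    is_lim Lf p_infty e1 /\ is_lim Rf p_infty e2.

Definition GAS_on (al mu ga : R) (S : R -> R -> Prop) (e1 e2 : R) : Prop :=
  equilibrium al mu ga e1 e2 /\ stable_on al mu ga S e1 e2 /\
  attractive_on al mu ga S e1 e2.

Definition simplex_minus_E0 (x y : R) : Prop :=
  in_simplex x y /\ ~ (x = 0 /\ y = 0).

From Stdlib Require Import Reals Lra.
From Coquelicot Require Import Coquelicot.
Open Scope R_scope.

(* The total S = L + R solves the logistic equation S' = S (beta (1 - S) - mu)
   on its own, and the imbalance D = L - R solves the linear equation
   D' = D ((alpha - gamma) (1 - S) - mu).  Gronwall-type comparisons for
   suitable functions of S show that [0, 1] is invariant for S, that S
   decreases to 0 when beta <= mu, and that S converges exponentially to the
   capacity 1 - mu / beta = 2 P* when beta > mu and S(0) > 0.  The rate of D is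
   then eventually below a negative constant: -gamma in the first case, and
   -gamma mu / beta once S is near 2 P* in the second.  Hence D decays
   exponentially, and L = (S + D) / 2, R = (S - D) / 2 converge.  On the
   diagonal L = R the system is logistic with explicit solutions; those
   started arbitrarily close to E0 still reach P* / 2, so E0 is unstable when
   beta > mu. *)

Definition right_cont0 (f : R -> R) : Prop := filterlim f (at_right 0) (locally (f 0)).

Lemma continuous_of_ex_derive (f : R -> R) (x : R) : ex_derive f x -> continuous f x.
Proof. exact (ex_derive_continuous (K := R_AbsRing) (V := R_NormedModule) f x). Qed.

Lemma right_cont0_of_continuous (f : R -> R) : continuous f 0 -> right_cont0 f.
Proof. intros hf; eapply filterlim_filter_le_1; [apply filter_le_within | exact hf]. Qed.

Lemma right_cont0_comp (phi f : R -> R) :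
  right_cont0 f -> continuous phi (f 0) -> right_cont0 (fun t => phi (f t)).
Proof. intros hf hphi; eapply filterlim_comp; eassumption. Qed.

Lemma right_cont0_plus (f g : R -> R) :
  right_cont0 f -> right_cont0 g -> right_cont0 (fun t => f t + g t).
Proof.
  intros hf hg; apply (filterlim_comp_2 f g Rplus hf hg).
  apply (filterlim_plus (K := R_AbsRing) (V := R_NormedModule)).
Qed.

Lemma right_cont0_mult (f g : R -> R) :
  right_cont0 f -> right_cont0 g -> right_cont0 (fun t => f t * g t).
Proof.
  intros hf hg; apply (filterlim_comp_2 f g Rmult hf hg).
  apply (filterlim_mult (K := R_AbsRing)).
Qed.

Lemma right_cont0_ge (f : R -> R) (c b : R) :
  right_cont0 f -> 0 < b -> (forall t, 0 < t <= b -> c <= f t) -> c <= f 0.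
Proof.
  intros hf hb hc; apply Rnot_lt_le; intros hlt.
  destruct (hf (ball (f 0) (mkposreal _ (proj2 (Rlt_0_minus _ _) hlt))) (locally_ball _ _))
    as [d hd].
  set (t := Rmin (d / 2) b).
  assert (ht : 0 < t <= b /\ t < d).
  { pose proof (cond_pos d); pose proof (Rmin_l (d / 2) b); pose proof (Rmin_r (d / 2) b).
    assert (0 < t) by (apply Rmin_glb_lt; lra). unfold t in *; lra. }
  assert (hball : Rabs (f t - f 0) < c - f 0).
  { apply (hd t); [|lra]. change (Rabs (t - 0) < d).
    rewrite Rminus_0_r, Rabs_pos_eq; lra. }
  apply Rabs_def2 in hball; specialize (hc t (proj1 ht)); lra.
Qed.

Lemma nonincreasing_of_derive_nonpos (f df : R -> R) (a b : R) :
  right_cont0 f -> (forall t, 0 < t -> is_derive f t (df t)) ->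
  (forall t, 0 < t -> a <= t <= b -> df t <= 0) -> 0 <= a <= b -> f b <= f a.
Proof.
  intros hf hd hneg hab.
  assert (hmvt : forall a', 0 < a' -> a <= a' <= b -> f b <= f a').
  { intros a' ha' ha'b.
    destruct (MVT_gen f a' b df) as [c [hc hfc]];
      rewrite ?Rmin_left, ?Rmax_right in * by lra.
    - intros x hx; apply hd; lra.
    - intros x hx; apply continuity_pt_filterlim, continuous_of_ex_derive.
      eexists; apply hd; lra.
    - assert (df c * (b - a') <= 0) by (apply Rmult_le_0_r; [apply hneg|]; lra).
      lra. }
  destruct (Rle_lt_or_eq_dec 0 a (proj1 hab)) as [ha | <-]; [apply hmvt; lra|].
  destruct (Rle_lt_or_eq_dec 0 b (proj2 hab)) as [hb | <-]; [|lra].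
  apply (right_cont0_ge f _ b hf hb); intros t ht; apply hmvt; lra.
Qed.

(* [W(s) exp(-K s)] is nonincreasing. *)
Lemma gronwall (W dW : R -> R) (K a t : R) :
  right_cont0 W -> (forall s, 0 < s -> is_derive W s (dW s)) ->
  (forall s, 0 < s -> a <= s <= t -> dW s <= K * W s) ->
  0 <= a <= t -> W t <= W a * exp (K * (t - a)).
Proof.
  intros hW hd hle hat.
  set (g := fun s => W s * exp (- K * s)).
  assert (hg : g t <= g a).
  { apply (nonincreasing_of_derive_nonpos g
      (fun s => dW s * exp (- K * s) + W s * (- K * exp (- K * s)))); auto.
    - apply right_cont0_mult; [exact hW|].
      apply right_cont0_of_continuous, continuous_of_ex_derive; auto_derive; auto.
    - intros s hs; apply (is_derive_mult W (fun s => exp (- K * s))).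
      + apply hd; auto.
      + auto_derive; auto; ring.
      + intros; apply Rmult_comm.
    - intros s hs hs'; specialize (hle s hs hs').
      assert (0 < exp (- K * s)) by apply exp_pos. nra. }
  unfold g in hg.
  assert (ht : W t = W t * exp (- K * t) * exp (K * t)).
  { rewrite Rmult_assoc, <- exp_plus.
    replace (- K * t + K * t) with 0 by ring; rewrite exp_0; ring. }
  assert (ha : W a * exp (K * (t - a)) = W a * exp (- K * a) * exp (K * t)).
  { rewrite Rmult_assoc, <- exp_plus; do 2 f_equal; ring. }
  rewrite ht, ha; apply Rmult_le_compat_r; [left; apply exp_pos | exact hg].
Qed.

Lemma gronwall_along (phi dphi S dS : R -> R) (K : R) :
  (forall x, is_derive phi x (dphi x)) -> right_cont0 S ->
  (forall s, 0 < s -> is_derive S s (dS s)) ->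
  (forall s, 0 < s -> dS s * dphi (S s) <= K * phi (S s)) ->
  forall t, 0 <= t -> phi (S t) <= phi (S 0) * exp (K * t).
Proof.
  intros hphi hS hdS hle t ht.
  replace (K * t) with (K * (t - 0)) by ring.
  apply (gronwall (fun s => phi (S s)) (fun s => dS s * dphi (S s))); auto; try lra.
  - apply right_cont0_comp; [exact hS|].
    apply continuous_of_ex_derive; eexists; apply hphi.
  - intros s hs; apply (is_derive_comp phi S); auto.
Qed.

Lemma linear_sq_decay (W k : R -> R) (c a t : R) : right_cont0 W ->
  (forall s, 0 < s -> is_derive W s (W s * k s)) ->
  (forall s, 0 < s -> a <= s <= t -> k s <= - c) -> 0 <= a <= t ->
  W t ^ 2 <= W a ^ 2 * exp (- (2 * c) * (t - a)).
Proof.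
  intros hW hd hk hat.
  apply (gronwall (fun s => W s ^ 2) (fun s => W s * k s * (2 * W s))); auto.
  - apply (right_cont0_comp (fun x => x ^ 2)); [exact hW|].
    apply continuous_of_ex_derive; auto_derive; auto.
  - intros s hs; apply (is_derive_comp (fun x => x ^ 2) W); auto.
    auto_derive; auto; ring.
  - intros s hs hs'; specialize (hk s hs hs').
    assert (0 <= W s ^ 2) by apply pow2_ge_0. nra.
Qed.

Lemma exp_le_1 (x : R) : x <= 0 -> exp x <= 1.
Proof.
  intros hx; rewrite <- exp_0.
  destruct (Rle_lt_or_eq_dec _ _ hx) as [hlt | ->]; [left; apply exp_increasing|]; lra.
Qed.

Lemma exp_tail (A c eps : R) : 0 < c -> 0 < eps ->
  exists M, forall t, M < t -> A * exp (- c * t) < eps.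
Proof.
  intros hc heps.
  exists (Rabs A / (c * eps)); intros t ht.
  assert (hM : 0 <= Rabs A / (c * eps)).
  { apply Rmult_le_pos; [apply Rabs_pos | left; apply Rinv_0_lt_compat; nra]. }
  assert (hct : Rabs A < c * t * eps).
  { apply (Rmult_lt_compat_r (c * eps)) in ht; [|nra].
    unfold Rdiv in ht; rewrite Rmult_assoc, Rinv_l in ht by nra; lra. }
  replace (- c * t) with (- (c * t)) by ring; rewrite exp_Ropp.
  assert (h1 : 1 + c * t < exp (c * t)) by (apply exp_ineq1; nra).
  apply (Rmult_lt_reg_r (exp (c * t))); [apply exp_pos|].
  rewrite Rmult_assoc, Rinv_l, Rmult_1_r by (apply Rgt_not_eq, exp_pos).
  pose proof (Rle_abs A). nra.
Qed.

Lemma is_lim_of_sq_dev_le_exp (f : R -> R) (l A c T : R) : 0 < c ->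
  (forall t, T <= t -> (f t - l) ^ 2 <= A * exp (- c * t)) -> is_lim f p_infty l.
Proof.
  intros hc hf; apply is_lim_spec; intros eps.
  destruct (exp_tail A c (eps ^ 2) hc) as [M hM]; [apply pow_lt, cond_pos|].
  exists (Rmax M T); intros t ht.
  assert (hsq : (f t - l) ^ 2 < eps ^ 2).
  { apply Rle_lt_trans with (A * exp (- c * t)).
    - apply hf; pose proof (Rmax_r M T); lra.
    - apply hM; pose proof (Rmax_l M T); lra. }
  pose proof (cond_pos eps); apply Rabs_def1; nra.
Qed.

Definition pos_sq (x : R) : R := Rmax x 0 ^ 2.

Lemma is_derive_pos_sq (x : R) : is_derive pos_sq x (2 * Rmax x 0).
Proof.
  apply is_derive_Reals; intros eps heps.
  exists (mkposreal _ heps); intros h hh0 hh; simpl in hh.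
  apply Rle_lt_trans with (Rabs h); [|exact hh].
  assert (hpos : 0 < Rabs h) by (apply Rabs_pos_lt; auto).
  replace ((pos_sq (x + h) - pos_sq x) / h - 2 * Rmax x 0)
    with ((pos_sq (x + h) - pos_sq x - 2 * Rmax x 0 * h) / h) by (field; auto).
  unfold Rdiv; rewrite Rabs_mult, Rabs_inv.
  apply (Rmult_le_reg_r (Rabs h)); auto.
  rewrite Rmult_assoc, Rinv_l, Rmult_1_r by lra.
  assert (hsq : Rabs h * Rabs h = h ^ 2) by (rewrite <- Rabs_mult, Rabs_pos_eq; nra).
  rewrite hsq; apply Rabs_le; unfold pos_sq, Rmax.
  destruct (Rle_dec (x + h) 0), (Rle_dec x 0); split; nra.
Qed.

Lemma pos_sq_eq0 (x : R) : x <= 0 -> pos_sq x = 0.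
Proof. intros hx; unfold pos_sq; rewrite Rmax_right by lra; ring. Qed.

Lemma pos_sq_le0 (x : R) : pos_sq x <= 0 -> x <= 0.
Proof. unfold pos_sq, Rmax; destruct (Rle_dec x 0); intros; nra. Qed.

Lemma is_derive_pos_sq_comp (g : R -> R) (x dg : R) :
  is_derive g x dg -> is_derive (fun y => pos_sq (g y)) x (dg * (2 * Rmax (g x) 0)).
Proof. intros hg; exact (is_derive_comp pos_sq g x _ dg (is_derive_pos_sq (g x)) hg). Qed.

(* The normalisation by [1 + x ^ 2] makes the logarithmic derivative of this
   function along the logistic field bounded, whereas that of [pos_sq (- x)]
   is not. *)
Definition neg_sq_ratio (x : R) : R := pos_sq (- x) / (1 + x ^ 2).

Lemma is_derive_neg_sq_ratio (x : R) :
  is_derive neg_sq_ratio x (- 2 * Rmax (- x) 0 / (1 + x ^ 2) ^ 2).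
Proof.
  assert (hq : 1 + x ^ 2 <> 0) by nra.
  assert (hd : is_derive neg_sq_ratio x
    ((-1 * (2 * Rmax (- x) 0) * (1 + x ^ 2) - pos_sq (- x) * (2 * x)) / (1 + x ^ 2) ^ 2)).
  { apply (is_derive_div (fun y => pos_sq (- y)) (fun y => 1 + y ^ 2)); auto.
    - apply (is_derive_pos_sq_comp Ropp); auto_derive; auto; ring.
    - auto_derive; auto; ring. }
  replace (- 2 * Rmax (- x) 0) with
    (-1 * (2 * Rmax (- x) 0) * (1 + x ^ 2) - pos_sq (- x) * (2 * x)); [exact hd|].
  unfold pos_sq, Rmax; destruct (Rle_dec (- x) 0); ring_simplify; nra.
Qed.

Definition logistic (b m x : R) : R := x * (b * (1 - x) - m).

Section Logistic.

Variables b m : R.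
Hypotheses (hb : 0 < b) (hm : 0 < m).
Variable S : R -> R.
Hypothesis hS0 : right_cont0 S.
Hypothesis hS : forall t, 0 < t -> is_derive S t (logistic b m (S t)).

Lemma logistic_le_1 : S 0 <= 1 -> forall t, 0 <= t -> S t <= 1.
Proof.
  intros h0 t ht.
  assert (hphi : pos_sq (S t - 1) <= pos_sq (S 0 - 1) * exp (0 * t)).
  { apply (gronwall_along (fun x => pos_sq (x - 1)) (fun x => 1 * (2 * Rmax (x - 1) 0))
      S (fun s => logistic b m (S s))); auto.
    - intros x; apply (is_derive_pos_sq_comp (fun y => y - 1)); auto_derive; auto; ring.
    - intros s _; unfold logistic, Rmax; destruct (Rle_dec (S s - 1) 0).
      + nra.
      + apply Rnot_le_lt in n.
        assert (b * (1 - S s) - m < 0) by nra.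
        rewrite Rmult_0_l; apply Rmult_le_0_r; nra. }
  rewrite (pos_sq_eq0 (S 0 - 1)), Rmult_0_l in hphi by lra.
  apply pos_sq_le0 in hphi; lra.
Qed.

Lemma logistic_ge_0 : 0 <= S 0 -> forall t, 0 <= t -> 0 <= S t.
Proof.
  intros h0 t ht.
  assert (hphi : neg_sq_ratio (S t) <= neg_sq_ratio (S 0) * exp (3 * b * t)).
  { apply (gronwall_along neg_sq_ratio
      (fun x => - 2 * Rmax (- x) 0 / (1 + x ^ 2) ^ 2) S (fun s => logistic b m (S s)) (3 * b));
      auto using is_derive_neg_sq_ratio.
    intros s _; unfold neg_sq_ratio, logistic; set (x := S s).
    assert (hq : 0 < 1 + x ^ 2) by nra.
    destruct (Rle_dec 0 x) as [hx | hx].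
    - rewrite pos_sq_eq0, Rmax_right by lra; unfold Rdiv; nra.
    - unfold pos_sq; rewrite Rmax_left by lra.
      replace (x * (b * (1 - x) - m) * (- 2 * - x / (1 + x ^ 2) ^ 2))
        with (2 * x ^ 2 * (b * (1 - x) - m) * / (1 + x ^ 2) ^ 2) by (field; lra).
      replace (3 * b * ((- x) ^ 2 / (1 + x ^ 2)))
        with (3 * b * x ^ 2 * (1 + x ^ 2) * / (1 + x ^ 2) ^ 2) by (field; lra).
      apply Rmult_le_compat_r; [left; apply Rinv_0_lt_compat; nra|].
      assert (0 <= x ^ 2 * (b * (2 * x ^ 2 + (1 + x) ^ 2) + 2 * m)) by
        (apply Rmult_le_pos; [nra | apply Rplus_le_le_0_compat; [apply Rmult_le_pos|]; nra]).
      nra. }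
  unfold neg_sq_ratio in hphi; rewrite (pos_sq_eq0 (- S 0)) in hphi by lra.
  assert (hq : 0 < 1 + S t ^ 2) by nra.
  assert (pos_sq (- S t) <= 0).
  { unfold Rdiv in hphi; rewrite !Rmult_0_l in hphi.
    apply (Rmult_le_reg_r (/ (1 + S t ^ 2))); [apply Rinv_0_lt_compat; lra | lra]. }
  apply pos_sq_le0 in H; lra.
Qed.

Lemma logistic_unit_interval : 0 <= S 0 <= 1 -> forall t, 0 <= t -> 0 <= S t <= 1.
Proof.
  intros h0 t ht; split; [apply logistic_ge_0 | apply logistic_le_1]; tauto.
Qed.

Section Extinction.

Hypothesis hbm : b <= m.
Hypothesis hS0_unit : 0 <= S 0 <= 1.

Lemma logistic_nonincreasing (a t : R) : 0 <= a <= t -> S t <= S a.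
Proof.
  intros hat; apply (nonincreasing_of_derive_nonpos S (fun s => logistic b m (S s))); auto.
  intros s hs _; destruct (logistic_unit_interval hS0_unit s) as [h1 h2]; [lra|].
  unfold logistic; nra.
Qed.

(* While [S >= eps], [S] drops at rate at least [b * eps ^ 2], so after time
   [2 / (b * eps ^ 2)] it is below [eps]. *)
Lemma is_lim_logistic_0 : is_lim S p_infty 0.
Proof.
  apply is_lim_spec; intros eps; pose proof (cond_pos eps) as he.
  set (T := 2 / (b * eps ^ 2)).
  assert (hT : 0 < T) by (apply Rdiv_lt_0_compat; [lra | apply Rmult_lt_0_compat; nra]).
  assert (hST : S T < eps).
  { apply Rnot_le_lt; intros hge.
    assert (hg : S T + b * eps ^ 2 * T <= S 0 + b * eps ^ 2 * 0).
    { apply (nonincreasing_of_derive_nonpos (fun s => S s + b * eps ^ 2 * s)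
        (fun s => logistic b m (S s) + b * eps ^ 2)); try lra.
      - apply right_cont0_plus; [exact hS0|].
        apply right_cont0_of_continuous, continuous_of_ex_derive; auto_derive; auto.
      - intros s hs; apply (is_derive_plus S (fun s => b * eps ^ 2 * s)); auto.
        auto_derive; auto; ring.
      - intros s hs hsT; assert (S T <= S s) by (apply logistic_nonincreasing; lra).
        destruct (logistic_unit_interval hS0_unit s) as [h1 h2]; [lra|].
        assert (S s * (b - m) <= 0) by (apply Rmult_le_0_l; lra).
        assert (b * (eps ^ 2 - S s ^ 2) <= 0) by (apply Rmult_le_0_l; nra).
        unfold logistic; nra. }
    assert (b * eps ^ 2 * T = 2) by (unfold T; field; nra).
    lra. }
  exists T; intros t ht.
  assert (S t <= S T) by (apply logistic_nonincreasing; lra).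
  destruct (logistic_unit_interval hS0_unit t) as [h1 h2]; [lra|].
  apply Rabs_def1; lra.
Qed.

End Extinction.

Section Persistence.

Hypothesis hmb : m < b.
Let K := 1 - m / b.

Lemma logistic_capacity_bounds : 0 < K < 1.
Proof.
  unfold K; assert (0 < m / b < 1) by (split; [apply Rdiv_lt_0_compat | apply Rlt_div_l]; lra).
  lra.
Qed.

Lemma logistic_eq_capacity (x : R) : logistic b m x = b * x * (K - x).
Proof. unfold logistic, K; field; lra. Qed.

Lemma logistic_lower_bound : 0 <= S 0 <= 1 -> forall t, 0 <= t -> Rmin (S 0) K <= S t.
Proof.
  intros h0 t ht; set (c := Rmin (S 0) K).
  assert (hcK : c <= K) by apply Rmin_r.
  assert (hc0 : c <= S 0) by apply Rmin_l.
  assert (hphi : pos_sq (c - S t) <= pos_sq (c - S 0) * exp (0 * t)).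
  { apply (gronwall_along (fun x => pos_sq (c - x)) (fun x => -1 * (2 * Rmax (c - x) 0))
      S (fun s => logistic b m (S s))); auto.
    - intros x; apply (is_derive_pos_sq_comp (fun y => c - y)); auto_derive; auto; ring.
    - intros s hs; rewrite logistic_eq_capacity.
      destruct (logistic_unit_interval h0 s) as [h1 h2]; [lra|].
      unfold Rmax; destruct (Rle_dec (c - S s) 0); [nra|].
      assert (0 <= b * S s * (K - S s)) by (apply Rmult_le_pos; nra).
      nra. }
  rewrite (pos_sq_eq0 (c - S 0)), Rmult_0_l in hphi by lra.
  apply pos_sq_le0 in hphi; lra.
Qed.

Lemma logistic_dev_sq_le (c : R) : (forall s, 0 < s -> c <= S s) ->
  forall t, 0 <= t -> (S t - K) ^ 2 <= (S 0 - K) ^ 2 * exp (- (2 * b * c) * t).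
Proof.
  intros hc; apply (gronwall_along (fun x => (x - K) ^ 2) (fun x => 2 * (x - K))
    S (fun s => logistic b m (S s))); auto.
  - intros x; auto_derive; auto; ring.
  - intros s hs; rewrite logistic_eq_capacity; specialize (hc s hs).
    assert (0 <= b * (S s - c) * (S s - K) ^ 2)
      by (apply Rmult_le_pos; [apply Rmult_le_pos | apply pow2_ge_0]; lra).
    nra.
Qed.

Lemma is_lim_logistic_capacity : 0 < S 0 <= 1 -> is_lim S p_infty K.
Proof.
  intros h0; pose proof logistic_capacity_bounds.
  set (c := Rmin (S 0) K).
  assert (hc : 0 < c) by (apply Rmin_glb_lt; lra).
  apply (is_lim_of_sq_dev_le_exp S K ((S 0 - K) ^ 2) (2 * b * c) 0); [nra|].
  intros t ht; apply logistic_dev_sq_le; [|lra].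
  intros s hs; apply logistic_lower_bound; lra.
Qed.

End Persistence.

End Logistic.

(* The solution of [P' = P (r - 2 b P)], [P 0 = p0]; with [b = alpha + gamma] and
   [r = b - mu], [L = R = P] solves the system. *)
Definition diag_logistic (b r p0 t : R) : R :=
  p0 * r * exp (r * t) / (r + 2 * b * p0 * (exp (r * t) - 1)).

Lemma diag_logistic_0 (b r p0 : R) : r <> 0 -> diag_logistic b r p0 0 = p0.
Proof. intros hr; unfold diag_logistic; rewrite Rmult_0_r, exp_0; field; lra. Qed.

(* The witness is the time [t] with [exp (r t) = r / (2 b p0)]. *)
Lemma diag_logistic_escapes (b r p0 : R) : 0 < b -> 0 < p0 -> 4 * b * p0 <= r ->
  exists t, 0 <= t /\ r / (4 * b) <= diag_logistic b r p0 t.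
Proof.
  intros hb hp hpr; assert (hr : 0 < r) by nra.
  set (q := r / (2 * b) / p0).
  assert (hq : 2 <= q).
  { apply Rmult_le_reg_r with (2 * b * p0); [nra|].
    unfold q; replace (r / (2 * b) / p0 * (2 * b * p0)) with r by (field; lra); lra. }
  exists (ln q / r); split.
  - apply Rmult_le_pos; [|left; apply Rinv_0_lt_compat; nra].
    rewrite <- ln_1; left; apply ln_increasing; lra.
  - assert (hden : 0 < 2 * r - 2 * b * p0) by nra.
    unfold diag_logistic.
    replace (r * (ln q / r)) with (ln q) by (field; nra); rewrite exp_ln by lra.
    replace (p0 * r * q / (r + 2 * b * p0 * (q - 1))) with (r * r / (2 * b) / (2 * r - 2 * b * p0))
      by (unfold q; field; lra).
    apply Rmult_le_reg_r with (4 * b * (2 * r - 2 * b * p0)); [apply Rmult_lt_0_compat; lra|].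
    replace (r * r / (2 * b) / (2 * r - 2 * b * p0) * (4 * b * (2 * r - 2 * b * p0)))
      with (2 * r * r) by (field; lra).
    replace (r / (4 * b) * (4 * b * (2 * r - 2 * b * p0))) with (2 * r * r - 2 * b * p0 * r)
      by (field; lra).
    assert (0 <= b * p0 * r) by (apply Rmult_le_pos; [apply Rmult_le_pos|]; lra).
    lra.
Qed.

Lemma dist2_nonneg (x1 y1 x2 y2 : R) : 0 <= dist2 x1 y1 x2 y2.
Proof. apply sqrt_pos. Qed.

Lemma dist2_diag_sq (x y e : R) :
  dist2 x y e e ^ 2 = ((x + y - 2 * e) ^ 2 + (x - y) ^ 2) / 2.
Proof.
  unfold dist2; rewrite pow2_sqrt by (apply Rplus_le_le_0_compat; apply pow2_ge_0).
  field.
Qed.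

Lemma dist2_diag_le (x y x0 y0 e : R) :
  (x + y - 2 * e) ^ 2 <= (x0 + y0 - 2 * e) ^ 2 -> (x - y) ^ 2 <= (x0 - y0) ^ 2 ->
  dist2 x y e e <= dist2 x0 y0 e e.
Proof.
  intros hs hd.
  assert (hsq : dist2 x y e e ^ 2 <= dist2 x0 y0 e e ^ 2) by (rewrite !dist2_diag_sq; lra).
  pose proof (dist2_nonneg x y e e); pose proof (dist2_nonneg x0 y0 e e).
  nra.
Qed.

Definition sumLR (Lf Rf : R -> R) (t : R) : R := Lf t + Rf t.
Definition diffLR (Lf Rf : R -> R) (t : R) : R := Lf t - Rf t.

Lemma is_lim_of_sumLR_diffLR (Lf Rf : R -> R) (s : R) :
  is_lim (sumLR Lf Rf) p_infty s -> is_lim (diffLR Lf Rf) p_infty 0 ->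
  is_lim Lf p_infty (/ 2 * s) /\ is_lim Rf p_infty (/ 2 * s).
Proof.
  intros hS hD.
  replace (/ 2 * s) with (/ 2 * (s + 0)) by ring; split.
  - apply (is_lim_ext (fun t => / 2 * (sumLR Lf Rf t + diffLR Lf Rf t))).
    + intros t; unfold sumLR, diffLR; field.
    + apply (is_lim_scal_l _ (/ 2) _ (s + 0)), is_lim_plus'; auto.
  - apply (is_lim_ext (fun t => / 2 * (sumLR Lf Rf t - diffLR Lf Rf t))).
    + intros t; unfold sumLR, diffLR; field.
    + replace (s + 0) with (s - 0) by ring.
      apply (is_lim_scal_l _ (/ 2) _ (s - 0)), is_lim_minus'; auto.
Qed.

Section Model.

Variables al mu ga : R.
Hypotheses (hal : 0 < al) (hmu : 0 < mu) (hga : 0 < ga).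

Lemma fL_add_fR (x y : R) :
  fL al mu ga x y + fR al mu ga x y = logistic (al + ga) mu (x + y).
Proof. unfold fL, fR, Cfree, logistic; ring. Qed.

Lemma fL_sub_fR (x y : R) :
  fL al mu ga x y - fR al mu ga x y = (x - y) * ((al - ga) * (1 - (x + y)) - mu).
Proof. unfold fL, fR, Cfree; ring. Qed.

Section Solution.

Variables Lf Rf : R -> R.
Hypothesis hsol : is_solution al mu ga Lf Rf.

Lemma right_cont0_sumLR : right_cont0 (sumLR Lf Rf).
Proof. destruct hsol as [_ [hL hR]]; apply right_cont0_plus; auto. Qed.

Lemma right_cont0_diffLR : right_cont0 (diffLR Lf Rf).
Proof.
  destruct hsol as [_ [hL hR]]; apply right_cont0_plus; [exact hL|].
  apply (right_cont0_comp Ropp); [exact hR|].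
  apply continuous_of_ex_derive; auto_derive; auto.
Qed.

Lemma is_derive_sumLR (t : R) : 0 < t ->
  is_derive (sumLR Lf Rf) t (logistic (al + ga) mu (sumLR Lf Rf t)).
Proof.
  intros ht; destruct (proj1 hsol t ht) as [hL hR].
  unfold sumLR; rewrite <- fL_add_fR; exact (is_derive_plus Lf Rf t _ _ hL hR).
Qed.

Lemma is_derive_diffLR (t : R) : 0 < t ->
  is_derive (diffLR Lf Rf) t
    (diffLR Lf Rf t * ((al - ga) * (1 - sumLR Lf Rf t) - mu)).
Proof.
  intros ht; destruct (proj1 hsol t ht) as [hL hR].
  unfold sumLR, diffLR; rewrite <- fL_sub_fR; exact (is_derive_minus Lf Rf t _ _ hL hR).
Qed.

Lemma sumLR_unit_interval : in_simplex (Lf 0) (Rf 0) ->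
  forall t, 0 <= t -> 0 <= sumLR Lf Rf t <= 1.
Proof.
  intros [h1 [h2 h3]]; apply (logistic_unit_interval (al + ga) mu); [lra | lra
    | exact right_cont0_sumLR | exact is_derive_sumLR | unfold sumLR; lra].
Qed.

Lemma diffLR_sq_decay (c a t : R) :
  (forall s, 0 < s -> a <= s <= t -> (al - ga) * (1 - sumLR Lf Rf s) - mu <= - c) ->
  0 <= a <= t -> diffLR Lf Rf t ^ 2 <= diffLR Lf Rf a ^ 2 * exp (- (2 * c) * (t - a)).
Proof.
  apply linear_sq_decay; [exact right_cont0_diffLR | exact is_derive_diffLR].
Qed.

End Solution.

Lemma stable_on_of_dist2_nonincreasing (S : R -> R -> Prop) (e1 e2 r : R) : 0 < r ->
  (forall Lf Rf, is_solution al mu ga Lf Rf -> S (Lf 0) (Rf 0) ->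
     dist2 (Lf 0) (Rf 0) e1 e2 < r ->
     forall t, 0 <= t -> dist2 (Lf t) (Rf t) e1 e2 <= dist2 (Lf 0) (Rf 0) e1 e2) ->
  stable_on al mu ga S e1 e2.
Proof.
  intros hr hdist eps heps; exists (Rmin eps r); split; [apply Rmin_glb_lt; lra|].
  intros Lf Rf hsol hS h0 t ht.
  pose proof (Rmin_l eps r); pose proof (Rmin_r eps r).
  apply Rle_lt_trans with (dist2 (Lf 0) (Rf 0) e1 e2); [apply hdist|]; auto; lra.
Qed.

Lemma E0_equilibrium : equilibrium al mu ga 0 0.
Proof. unfold equilibrium, fL, fR, Cfree; split; ring. Qed.

Section Extinction.

Hypothesis hbm : al + ga <= mu.

Lemma diff_rate_extinction (x : R) : 0 <= x <= 1 -> (al - ga) * (1 - x) - mu <= - ga.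
Proof. intros hx; destruct (Rle_dec ga al); nra. Qed.

Lemma diffLR_sq_le_extinction (Lf Rf : R -> R) :
  is_solution al mu ga Lf Rf -> in_simplex (Lf 0) (Rf 0) ->
  forall t, 0 <= t -> diffLR Lf Rf t ^ 2 <= diffLR Lf Rf 0 ^ 2 * exp (- (2 * ga) * t).
Proof.
  intros hsol hin t ht; replace t with (t - 0) at 2 by ring.
  apply diffLR_sq_decay; auto; try lra.
  intros s hs _; apply diff_rate_extinction, (sumLR_unit_interval Lf Rf); auto; lra.
Qed.

Lemma E0_stable : stable_on al mu ga in_simplex 0 0.
Proof.
  apply (stable_on_of_dist2_nonincreasing _ _ _ 1); [lra|].
  intros Lf Rf hsol hin _ t ht; apply dist2_diag_le; rewrite ?Rmult_0_r, ?Rminus_0_r.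
  - assert (hS := sumLR_unit_interval Lf Rf hsol hin).
    assert (sumLR Lf Rf t <= sumLR Lf Rf 0).
    { apply (logistic_nonincreasing (al + ga) mu); [lra | lra | exact (right_cont0_sumLR Lf Rf hsol)
        | exact (is_derive_sumLR Lf Rf hsol) | lra | apply hS | ]; lra. }
    destruct (hS t ht); unfold sumLR in *; nra.
  - eapply Rle_trans; [apply (diffLR_sq_le_extinction Lf Rf); auto|].
    assert (exp (- (2 * ga) * t) <= 1) by (apply exp_le_1; nra).
    assert (0 <= diffLR Lf Rf 0 ^ 2) by apply pow2_ge_0.
    unfold diffLR in *; nra.
Qed.

Lemma E0_attractive (Lf Rf : R -> R) :
  is_solution al mu ga Lf Rf -> in_simplex (Lf 0) (Rf 0) ->
  is_lim Lf p_infty 0 /\ is_lim Rf p_infty 0 /\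
  is_lim (fun t => Cfree (Lf t) (Rf t)) p_infty 1.
Proof.
  intros hsol hin.
  assert (hS : is_lim (sumLR Lf Rf) p_infty 0).
  { apply (is_lim_logistic_0 (al + ga) mu); [lra | lra | exact (right_cont0_sumLR Lf Rf hsol)
      | exact (is_derive_sumLR Lf Rf hsol) | lra | ].
    apply (sumLR_unit_interval Lf Rf hsol hin); lra. }
  assert (hD : is_lim (diffLR Lf Rf) p_infty 0).
  { apply (is_lim_of_sq_dev_le_exp _ 0 (diffLR Lf Rf 0 ^ 2) (2 * ga) 0); [lra|].
    intros t ht; rewrite Rminus_0_r; apply diffLR_sq_le_extinction; auto. }
  destruct (is_lim_of_sumLR_diffLR Lf Rf 0 hS hD) as [hL hR].
  rewrite Rmult_0_r in hL, hR; split; [|split]; auto.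
  assert (hC := is_lim_minus' _ _ p_infty 1 0 (is_lim_const 1 p_infty) hS).
  rewrite Rminus_0_r in hC.
  apply (is_lim_ext (fun t => 1 - sumLR Lf Rf t)); [intros; unfold sumLR, Cfree; ring | exact hC].
Qed.

End Extinction.

Section Persistence.

Hypothesis hmb : mu < al + ga.

Lemma E1_interior :
  in_interior (/ 2 * (1 - mu / (al + ga))) (/ 2 * (1 - mu / (al + ga))).
Proof.
  pose proof (logistic_capacity_bounds (al + ga) mu) as hK.
  unfold in_interior; lra.
Qed.

Lemma E1_equilibrium :
  equilibrium al mu ga (/ 2 * (1 - mu / (al + ga))) (/ 2 * (1 - mu / (al + ga))).
Proof. unfold equilibrium, fL, fR, Cfree; split; field; lra. Qed.

Lemma E1_unique_interior_equilibrium (e1 e2 : R) :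
  in_interior e1 e2 -> equilibrium al mu ga e1 e2 ->
  e1 = / 2 * (1 - mu / (al + ga)) /\ e2 = / 2 * (1 - mu / (al + ga)).
Proof.
  intros [h1 [h2 h3]] [hL hR].
  assert (hsum := fL_add_fR e1 e2); assert (hdiff := fL_sub_fR e1 e2).
  rewrite hL, hR, Rplus_0_r in hsum; rewrite hL, hR, Rminus_0_r in hdiff.
  unfold logistic in hsum.
  assert (hs : e1 + e2 = 1 - mu / (al + ga)).
  { destruct (Rmult_integral _ _ (eq_sym hsum)) as [h | h]; [lra|].
    replace mu with ((al + ga) * (1 - (e1 + e2))) by lra; field; lra. }
  assert (hrate : (al - ga) * (1 - (e1 + e2)) - mu = - 2 * (ga * mu / (al + ga)))
    by (rewrite hs; field; lra).
  assert (0 < ga * mu / (al + ga)) by (apply Rdiv_lt_0_compat; nra).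
  rewrite hrate in hdiff.
  destruct (Rmult_integral _ _ (eq_sym hdiff)) as [h | h]; lra.
Qed.

Lemma diff_rate_near_E1 (x : R) :
  Rabs (x - (1 - mu / (al + ga))) < ga * mu / (al + ga) ^ 2 ->
  (al - ga) * (1 - x) - mu <= - (ga * mu / (al + ga)).
Proof.
  set (e := x - (1 - mu / (al + ga))); intros he.
  assert (hrate : (al - ga) * (1 - x) - mu
    = - 2 * (ga * mu / (al + ga)) - (al - ga) * e) by (unfold e; field; lra).
  assert (hc : ga * mu / (al + ga) = (al + ga) * (ga * mu / (al + ga) ^ 2))
    by (field; lra).
  assert (hae : Rabs ((al - ga) * e) <= ga * mu / (al + ga)).
  { rewrite Rabs_mult, hc.
    apply Rmult_le_compat; [apply Rabs_pos | apply Rabs_pos | | lra].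
    apply Rabs_le; lra. }
  pose proof (Rle_abs (- ((al - ga) * e))); rewrite Rabs_Ropp in *; lra.
Qed.

Lemma E1_stable :
  stable_on al mu ga simplex_minus_E0
    (/ 2 * (1 - mu / (al + ga))) (/ 2 * (1 - mu / (al + ga))).
Proof.
  set (K := 1 - mu / (al + ga)); set (d := ga * mu / (al + ga) ^ 2).
  assert (hd : 0 < d) by (apply Rdiv_lt_0_compat; [nra | apply pow_lt; lra]).
  apply (stable_on_of_dist2_nonincreasing _ _ _ (d / 2)); [lra|].
  intros Lf Rf hsol [hin _] h0 t ht.
  assert (hK2 : 2 * (/ 2 * K) = K) by field.
  assert (hdev0 : (sumLR Lf Rf 0 - K) ^ 2 < d ^ 2).
  { pose proof (dist2_diag_sq (Lf 0) (Rf 0) (/ 2 * K)) as hsq; rewrite hK2 in hsq.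
    pose proof (dist2_nonneg (Lf 0) (Rf 0) (/ 2 * K) (/ 2 * K)).
    pose proof (pow2_ge_0 (Lf 0 - Rf 0)).
    unfold sumLR; nra. }
  assert (hdev : forall s, 0 <= s -> (sumLR Lf Rf s - K) ^ 2 <= (sumLR Lf Rf 0 - K) ^ 2).
  { intros s hs.
    assert (h := logistic_dev_sq_le (al + ga) mu (Rplus_lt_0_compat _ _ hal hga) (sumLR Lf Rf)
      (right_cont0_sumLR Lf Rf hsol) (is_derive_sumLR Lf Rf hsol) 0
      (fun s hs => proj1 (sumLR_unit_interval Lf Rf hsol hin s (Rlt_le _ _ hs))) s hs).
    replace (- (2 * (al + ga) * 0) * s) with 0 in h by ring.
    rewrite exp_0, Rmult_1_r in h; exact h. }
  apply dist2_diag_le; [rewrite hK2; exact (hdev t ht)|].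
  assert (hD := diffLR_sq_decay Lf Rf hsol (ga * mu / (al + ga)) 0 t).
  rewrite Rminus_0_r in hD; eapply Rle_trans; [apply hD; [|lra]|].
  - intros s hs _; apply diff_rate_near_E1; fold K d.
    assert ((sumLR Lf Rf s - K) ^ 2 < d ^ 2) by (eapply Rle_lt_trans; [apply hdev|]; lra).
    apply Rabs_def1; nra.
  - assert (exp (- (2 * (ga * mu / (al + ga))) * t) <= 1).
    { apply exp_le_1; assert (0 < ga * mu / (al + ga)) by (apply Rdiv_lt_0_compat; nra). nra. }
    pose proof (pow2_ge_0 (diffLR Lf Rf 0)); unfold diffLR in *; nra.
Qed.

Lemma E1_attractive (Lf Rf : R -> R) :
  is_solution al mu ga Lf Rf -> simplex_minus_E0 (Lf 0) (Rf 0) ->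
  is_lim Lf p_infty (/ 2 * (1 - mu / (al + ga))) /\
  is_lim Rf p_infty (/ 2 * (1 - mu / (al + ga))).
Proof.
  intros hsol [[h1 [h2 h3]] hne].
  set (K := 1 - mu / (al + ga)); set (c := ga * mu / (al + ga)).
  assert (hc : 0 < c) by (apply Rdiv_lt_0_compat; nra).
  assert (hS : is_lim (sumLR Lf Rf) p_infty K).
  { apply (is_lim_logistic_capacity (al + ga) mu); [lra | lra | exact (right_cont0_sumLR Lf Rf hsol)
      | exact (is_derive_sumLR Lf Rf hsol) | lra | ].
    unfold sumLR; split; [|lra].
    destruct h1 as [h1 | h1]; [lra|]; destruct h2 as [h2 | h2]; [lra|].
    exfalso; apply hne; auto. }
  assert (hd : 0 < ga * mu / (al + ga) ^ 2) by (apply Rdiv_lt_0_compat; [nra | apply pow_lt; lra]).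
  destruct (proj2 (is_lim_spec _ _ _) hS (mkposreal _ hd)) as [M hM]; simpl in hM.
  set (T := Rmax M 0 + 1).
  assert (hT : M < T /\ 0 < T) by (pose proof (Rmax_l M 0); pose proof (Rmax_r M 0); unfold T; lra).
  assert (hD : is_lim (diffLR Lf Rf) p_infty 0).
  { apply (is_lim_of_sq_dev_le_exp _ 0 (diffLR Lf Rf T ^ 2 * exp (2 * c * T)) (2 * c) T); [lra|].
    intros t ht; rewrite Rminus_0_r.
    replace (diffLR Lf Rf T ^ 2 * exp (2 * c * T) * exp (- (2 * c) * t))
      with (diffLR Lf Rf T ^ 2 * exp (- (2 * c) * (t - T)))
      by (rewrite Rmult_assoc, <- exp_plus; do 2 f_equal; ring).
    apply diffLR_sq_decay; auto; [|lra].
    intros s _ [hs _]; apply diff_rate_near_E1, hM; lra. }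
  exact (is_lim_of_sumLR_diffLR Lf Rf K hS hD).
Qed.

Lemma diag_logistic_solution (p0 : R) : 0 < p0 -> 2 * (al + ga) * p0 < al + ga - mu ->
  is_solution al mu ga (diag_logistic (al + ga) (al + ga - mu) p0)
    (diag_logistic (al + ga) (al + ga - mu) p0).
Proof.
  intros hp hpr; set (P := diag_logistic (al + ga) (al + ga - mu) p0).
  assert (hder : forall t, is_derive P t (fL al mu ga (P t) (P t))).
  { intros t.
    assert (0 < 2 * (al + ga) * p0 * exp ((al + ga - mu) * t))
      by (apply Rmult_lt_0_compat; [nra | apply exp_pos]).
    assert (hden : 0 < al + ga - mu + 2 * (al + ga) * p0 * (exp ((al + ga - mu) * t) - 1))
      by lra.
    unfold P, diag_logistic; auto_derive; [lra|].
    unfold fL, Cfree; field; lra. }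
  assert (hfRL : forall t, fR al mu ga (P t) (P t) = fL al mu ga (P t) (P t))
    by (intros; unfold fL, fR; ring).
  assert (hcont : right_cont0 P).
  { apply right_cont0_of_continuous, continuous_of_ex_derive; eexists; apply hder. }
  split; [|split]; [|exact hcont | exact hcont].
  intros t _; rewrite hfRL; split; apply hder.
Qed.

Lemma E0_unstable : ~ stable_on al mu ga in_simplex 0 0.
Proof.
  intros hst.
  set (b := al + ga); set (r := b - mu).
  assert (hb : 0 < b) by (unfold b; lra); assert (hr : 0 < r < b) by (unfold r, b; lra).
  assert (heps : 0 < r / (4 * b)) by (apply Rdiv_lt_0_compat; lra).
  destruct (hst (r / (4 * b)) heps) as [delta [hdel hstab]].
  set (p0 := Rmin (delta / 2) (r / (4 * b))).
  assert (hp0 : 0 < p0 /\ p0 <= delta / 2 /\ p0 <= r / (4 * b)).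
  { pose proof (Rmin_l (delta / 2) (r / (4 * b))); pose proof (Rmin_r (delta / 2) (r / (4 * b))).
    assert (0 < p0) by (apply Rmin_glb_lt; lra). unfold p0 in *; lra. }
  assert (hbp0 : 4 * b * p0 <= r).
  { assert (4 * b * (r / (4 * b)) = r) by (field; lra).
    assert (4 * b * p0 <= 4 * b * (r / (4 * b))) by (apply Rmult_le_compat_l; lra).
    lra. }
  assert (hsol : is_solution al mu ga (diag_logistic b r p0) (diag_logistic b r p0))
    by (apply diag_logistic_solution; fold b r; lra).
  assert (hP0 : diag_logistic b r p0 0 = p0) by (apply diag_logistic_0; lra).
  assert (hdist : forall p, dist2 p p 0 0 ^ 2 = 2 * p ^ 2)
    by (intros; rewrite dist2_diag_sq; field).
  assert (hin : in_simplex (diag_logistic b r p0 0) (diag_logistic b r p0 0)).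
  { assert (r / (4 * b) < / 4) by (apply Rlt_div_l; lra).
    rewrite hP0; unfold in_simplex; lra. }
  assert (hnear : dist2 (diag_logistic b r p0 0) (diag_logistic b r p0 0) 0 0 < delta).
  { assert (2 * p0 ^ 2 < delta ^ 2) by nra.
    pose proof (hdist p0); pose proof (dist2_nonneg p0 p0 0 0).
    rewrite hP0; nra. }
  destruct (diag_logistic_escapes b r p0 hb (proj1 hp0) hbp0) as [t [ht hfar]].
  assert (hclose := hstab _ _ hsol hin hnear t ht).
  set (p := diag_logistic b r p0 t) in *.
  pose proof (hdist p); pose proof (dist2_nonneg p p 0 0).
  assert ((r / (4 * b)) ^ 2 <= 2 * p ^ 2) by nra.
  nra.
Qed.

End Persistence.

End Model.

Theorem theorem3p4 (al mu ga : R) (hal : 0 < al) (hmu : 0 < mu) (hga : 0 < ga) :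
  (al + ga <= mu ->
     GAS_on al mu ga in_simplex 0 0 /\
     (forall Lf Rf, is_solution al mu ga Lf Rf -> in_simplex (Lf 0) (Rf 0) ->
        is_lim Lf p_infty 0 /\ is_lim Rf p_infty 0 /\
        is_lim (fun t => Cfree (Lf t) (Rf t)) p_infty 1)) /\
  (mu < al + ga ->
     let Ps := / 2 * (1 - mu / (al + ga)) in
     (in_interior Ps Ps /\ equilibrium al mu ga Ps Ps /\
      (forall e1 e2, in_interior e1 e2 -> equilibrium al mu ga e1 e2 ->
         e1 = Ps /\ e2 = Ps)) /\
     GAS_on al mu ga simplex_minus_E0 Ps Ps /\
     ~ stable_on al mu ga in_simplex 0 0).
Proof.
  split.
  - intros hbm; split; [split; [|split]|].
    + apply E0_equilibrium.
    + apply E0_stable; auto.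
    + intros Lf Rf hsol hin; destruct (E0_attractive al mu ga hal hmu hga hbm Lf Rf hsol hin)
        as [hL [hR _]]; auto.
    + apply E0_attractive; auto.
  - intros hmb Ps; split; [split; [|split] | split; [split; [|split]|]].
    + apply E1_interior; auto.
    + apply E1_equilibrium; auto.
    + apply E1_unique_interior_equilibrium; auto.
    + apply E1_equilibrium; auto.
    + apply E1_stable; auto.
    + intros Lf Rf hsol hin; apply E1_attractive; auto.
    + apply E0_unstable; auto.
Qed.
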